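(* Let $S=\{a_i \bmod d_i : 1\le i\le r\}$ be an exact covering system and $G_S$ its exact covering system digraph. If a vertex $n$ of $G_S$ is an ancestor of a cyclic vertex, then $n$ is itself a cyclic vertex.
   Context: A system of congruences $S=\{a_i \bmod d_i : 1\le i\le r\}$ with integers $a_i$ and nonzero integers $d_i$ (negative $d_i$ allowed; $n\equiv a \bmod -d$ means $n\equiv a\bmod d$) is an exact covering system if every integer satisfies exactly one of the congruences; congruences are distinguished by their chosen representatives $a_i$. The exact covering system digraph $G_S$ has vertex set $\mathbb{Z}$ and edges $(n,d_in+a_i)$ for all $n\in\mathbb{Z}$, $1\le i\le r$. Every vertex has indegree one; the predecessor $P(n)$ is the unique integer with $(P(n),n)$ an edge, and $m$ is an ancestor of $n$ if $m=P^k(n)$ for some $k\in\mathbb{N}$. A cyclic vertex is a vertex lying on a directed cycle of $G_S$ (loops included). *)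

From mathcomp Require Import all_boot all_order all_algebra.
Set Implicit Arguments. Unset Strict Implicit. Unset Printing Implicit Defensive.
Import Order.TTheory GRing.Theory Num.Theory.
Local Open Scope ring_scope.

Definition sat_cong (a d n : int) : bool := (d %| n - a)%Z.

(* Exact covering system: all moduli nonzero, every integer satisfies
   exactly one of the r congruences (counted by index). *)
Definition exact_covering (r : nat) (a d : 'I_r -> int) : Prop :=
  (forall i, d i != 0) /\
  (forall n : int, exists! i : 'I_r, sat_cong (a i) (d i) n).

Definition ecs_edge (r : nat) (a d : 'I_r -> int) (m n : int) : Prop :=
  exists i : 'I_r, n = d i * m + a i.

Fixpoint ecs_walk (r : nat) (a d : 'I_r -> int) (k : nat) (m n : int) : Prop :=
  match k with
  | 0%N => m = n
  | k'.+1 => exists p, ecs_edge a d m p /\ ecs_walk a d k' p n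
  end.

Definition ecs_cyclic (r : nat) (a d : 'I_r -> int) (n : int) : Prop :=
  exists k : nat, (0 < k)%N /\ ecs_walk a d k n n.

(* Predecessor P(n): for the unique i with n = a_i mod d_i,
   P(n) = (n - a_i)/d_i (the unique m with (m, n) an edge, when S is an
   exact covering system).  Outside that hypothesis the value is junk. *)
Definition ecs_pred (r : nat) (a d : 'I_r -> int) (n : int) : int :=
  match [pick i : 'I_r | sat_cong (a i) (d i) n] with
  | Some i => ((n - a i) %/ d i)%Z
  | None => n
  end.

Definition ecs_ancestor (r : nat) (a d : 'I_r -> int) (m n : int) : Prop :=
  exists k : nat, m = iter k (ecs_pred a d) n.

From mathcomp Require Import all_boot all_order all_algebra.
Set Implicit Arguments. Unset Strict Implicit. Unset Printing Implicit Defensive.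
Import GRing.Theory.

(* In an exact covering system the predecessor of a vertex is the source of
   its unique incoming edge.  On a cycle that edge is the last edge of the
   cycle, so rotating the cycle by one step shows that the predecessor of a
   cyclic vertex is again cyclic; iterating gives the theorem. *)

Section CoveringDigraph.

Local Open Scope ring_scope.

Variables (r : nat) (a d : 'I_r -> int).

Lemma ecs_walk_cat k1 k2 m p n :
  ecs_walk a d k1 m p -> ecs_walk a d k2 p n -> ecs_walk a d (k1 + k2) m n.
Proof.
elim: k1 m => [|k IH] m /=; first by move=> ->.
by case=> q [e w] w2; exists q; split => //; apply: IH.
Qed.

Lemma ecs_walkSr k m n :
  ecs_walk a d k.+1 m n -> exists2 p, ecs_walk a d k m p & ecs_edge a d p n.
Proof.
elim: k m => [|k IH] m /=.
  by case=> q [e <-]; exists m.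
case=> q [e /IH [p w1 e1]].
by exists p => //; exists q.
Qed.

Hypothesis ecs : exact_covering a d.

Lemma ecs_pred_edge m n : ecs_edge a d m n -> ecs_pred a d n = m.
Proof.
case: ecs => d_neq0 cover [i ->].
have sat_i : sat_cong (a i) (d i) (d i * m + a i).
  by rewrite /sat_cong addrK dvdz_mulr.
rewrite /ecs_pred; case: pickP => [j sat_j|/(_ i)]; last by rewrite sat_i.
have [_ uniq_cong] := proj2 (unique_existence _) (cover (d i * m + a i)).
have <- := uniq_cong i j sat_i sat_j.
by rewrite addrK mulKz ?d_neq0.
Qed.

Lemma ecs_cyclic_pred n : ecs_cyclic a d n -> ecs_cyclic a d (ecs_pred a d n).
Proof.
case=> [[|k] [// _ /ecs_walkSr [p walk_np edge_pn]]].
rewrite (ecs_pred_edge edge_pn); exists k.+1; split => //.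
by apply: (@ecs_walk_cat 1 k _ n) walk_np; exists n.
Qed.

End CoveringDigraph.

Theorem mainTheorem6 (r : nat) (a d : 'I_r -> int) :
  exact_covering a d ->
  forall n c : int, ecs_cyclic a d c -> ecs_ancestor a d n c -> ecs_cyclic a d n.
Proof.
move=> ecs n c cyc_c [k ->]; elim: k => [|k IH] //=.
exact: ecs_cyclic_pred.
Qed.
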